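(* Let $r_1=\frac5{11}+\frac1{22\pi}$, $r_2=\frac5{11}-\frac1{220\pi}$. Let $f$ be the interval exchange transformation of $I=[-1,1)$ with alphabet $\mathcal{A}=\{A,B,C,D,E,F,G,H\}$, where the intervals $I_A,I_B,\dots,I_H$ appear in $I$ in this order from left to right, the images $f(I_D),f(I_B),f(I_E),f(I_C),f(I_H),f(I_F),f(I_A),f(I_G)$ appear in $I$ in this order from left to right, and the lengths are $$(\lambda_A,\dots,\lambda_H)=\Big(\tfrac1{20\pi},\ \tfrac12,\ \tfrac1{22}-\tfrac{21}{220\pi},\ \tfrac5{11}+\tfrac1{22\pi},\ \tfrac1{20\pi},\ \tfrac12,\ \tfrac1{22}-\tfrac{21}{220\pi},\ \tfrac5{11}+\tfrac1{22\pi}\Big)$$ (equivalently $(r_1-r_2,\ \frac12,\ r_2-2r_1+\frac12,\ r_1,\ r_1-r_2,\ \frac12,\ r_2-2r_1+\frac12,\ r_1)$). Then $f$ satisfies the modified Keane condition: $f^m(p_\alpha)\ne p_\beta$ for all $m\ge1$, all $\alpha\in\mathcal{A}$, and all $\beta\in\mathcal{A}$ with $p_\beta\notin\{-1,0\}$, where $p_\alpha$ denotes the left endpoint of $I_\alpha$.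
   Context: An interval exchange transformation of $I=[-1,1)$: a finite partition of $I$ into intervals $I_\alpha$ closed on the left and open on the right, and a bijection $f:I\to I$ whose restriction to each $I_\alpha$ is a translation; it is determined by the left-to-right order of the $I_\alpha$ in $I$, the left-to-right order of the $f(I_\alpha)$ in $I$, and the lengths $\lambda_\alpha$ of the $I_\alpha$. *)

From Stdlib Require Import Reals List.
Import ListNotations.
Open Scope R_scope.

Inductive letter : Type := A | B | C | D | E | F | G | H.

Definition letter_eq_dec (a b : letter) : {a = b} + {a <> b}.
Proof. decide equality. Defined.

(* Left-to-right order of the intervals I_alpha in I = [-1,1). *)
Definition top_order : list letter := [A; B; C; D; E; F; G; H].
(* Left-to-right order of the images f(I_alpha) in I. *)
Definition bot_order : list letter := [D; B; E; C; H; F; A; G].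

Definition lam (a : letter) : R :=
  match a with
  | A => 1 / (20 * PI)
  | B => 1 / 2
  | C => 1 / 22 - 21 / (220 * PI)
  | D => 5 / 11 + 1 / (22 * PI)
  | E => 1 / (20 * PI)
  | F => 1 / 2
  | G => 1 / 22 - 21 / (220 * PI)
  | H => 5 / 11 + 1 / (22 * PI)
  end.

Fixpoint sum_before (l : list letter) (a : letter) : R :=
  match l with
  | [] => 0
  | b :: l' => if letter_eq_dec a b then 0 else lam b + sum_before l' a
  end.

Definition p (a : letter) : R := -1 + sum_before top_order a.
Definition q (a : letter) : R := -1 + sum_before bot_order a.

Definition in_I (a : letter) (x : R) : bool :=
  if Rle_dec (p a) x then (if Rlt_dec x (p a + lam a) then true else false)
  else false.

(* The interval exchange f : translation by q a - p a on I_a = [p a, p a + lam a).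
   (Outside I = [-1,1) it is the identity; irrelevant since orbits stay in I.) *)
Definition iet_f (x : R) : R :=
  fold_right (fun a acc => if in_I a x then x - p a + q a else acc) x top_order.

Definition modified_keane (T : R -> R) : Prop :=
  forall (m : nat) (a b : letter), (1 <= m)%nat ->
    p b <> -1 -> p b <> 0 -> Nat.iter m T (p a) <> p b.

(* Every endpoint and every translation of f lies in the group (Z + Z/PI)/220.  The
   1/PI-coordinate of the translation is 10 on every piece except I_B and I_F, where it is
   -1 = 10 - 11; hence the 1/PI-coordinate of f^m(p_a) - p_a is 10m - 11K, K being the number
   of visits of the orbit to I_B u I_F.  An orbit never visits I_B u I_F three times in a row,
   so 3K <= 2m + 2.  As PI is irrational the 1/PI-coordinate of a point is well defined; it is
   0, 11 or -10 for p_a, and 11 or -10 for p_b when p_b is not -1 or 0, and these constraints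
   are incompatible for m >= 1. *)
From Pilot Require Import Defs.
From Stdlib Require Import Reals Lra Lia ZArith List.
Open Scope R_scope.

Definition invPI : R := / PI.

Lemma invPI_bounds : 1 / 4 <= invPI < 1 / 3.
Proof.
  unfold invPI. pose proof PI2_3_2. pose proof PI_4.
  split.
  - apply (Rmult_le_reg_l PI); [lra|]. field_simplify; lra.
  - apply (Rmult_lt_reg_l PI); [lra|]. field_simplify; lra.
Qed.

Definition lattice (u w : Z) : R := (IZR u + IZR w * invPI) / 220.

Lemma lattice_add u1 w1 u2 w2 :
  lattice u1 w1 + lattice u2 w2 = lattice (u1 + u2) (w1 + w2).
Proof. unfold lattice; rewrite !plus_IZR; field. Qed.

(* [C] alone would denote Stdlib's binomial coefficient. *)
Definition p_coord (a : letter) : Z * Z :=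
  match a with
  | A => (-220, 0) | B => (-220, 11) | Defs.C => (-110, 11) | D => (-100, -10)
  | E => (0, 0) | F => (0, 11) | G => (110, 11) | H => (120, -10)
  end%Z.

Definition q_coord (a : letter) : Z * Z :=
  match a with
  | A => (210, 10) | B => (-120, 10) | Defs.C => (-10, 21) | D => (-220, 0)
  | E => (-10, 10) | F => (100, 10) | G => (210, 21) | H => (0, 0)
  end%Z.

Definition lam_coord (a : letter) : Z * Z :=
  match a with
  | A | E => (0, 11) | B | F => (110, 0) | Defs.C | G => (10, -21) | D | H => (100, 10)
  end%Z.

Lemma p_lattice a : p a = lattice (fst (p_coord a)) (snd (p_coord a)).
Proof. destruct a; unfold p, lattice, invPI; simpl; field; apply PI_neq0. Qed.

Lemma q_lattice a : q a = lattice (fst (q_coord a)) (snd (q_coord a)).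
Proof. destruct a; unfold q, lattice, invPI; simpl; field; apply PI_neq0. Qed.

Lemma lam_lattice a : lam a = lattice (fst (lam_coord a)) (snd (lam_coord a)).
Proof. destruct a; unfold lam, lattice, invPI; simpl; field; apply PI_neq0. Qed.

Ltac endpoints_lra :=
  rewrite ?p_lattice, ?q_lattice, ?lam_lattice in *;
  cbn [p_coord q_coord lam_coord fst snd] in *; unfold lattice in *;
  rewrite ?minus_IZR, ?mult_IZR in *;
  pose proof invPI_bounds; lra.

Definition in_piece (a : letter) (x : R) : Prop := p a <= x < p a + lam a.

Lemma in_I_piece a x : in_I a x = true <-> in_piece a x.
Proof.
  unfold in_I, in_piece.
  destruct (Rle_dec (p a) x), (Rlt_dec x (p a + lam a)); split; intuition (try lra; discriminate).
Qed.

Lemma in_piece_unique a b x : in_piece a x -> in_piece b x -> a = b.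
Proof. unfold in_piece; destruct a, b; intros; solve [reflexivity | exfalso; endpoints_lra]. Qed.

Lemma iet_f_piece a x : in_piece a x -> iet_f x = x - p a + q a.
Proof.
  intros ha.
  assert (Hin : In a top_order) by (destruct a; simpl; tauto).
  unfold iet_f; revert Hin; generalize top_order as l.
  induction l as [|b l IH]; simpl; [contradiction|]; intros Hin.
  destruct (in_I b x) eqn:hb.
  - apply in_I_piece in hb. now rewrite (in_piece_unique b a x hb ha).
  - destruct Hin as [<-|Hin]; [|exact (IH Hin)].
    apply in_I_piece in ha; congruence.
Qed.

Definition in_domain (x : R) : Prop := -1 <= x < 1.

Lemma in_piece_cover x : in_domain x -> exists a, in_piece a x.
Proof.
  unfold in_domain, in_piece; intros hx.
  destruct (Rlt_le_dec x (p B)); [exists A; endpoints_lra|].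
  destruct (Rlt_le_dec x (p Defs.C)); [exists B; endpoints_lra|].
  destruct (Rlt_le_dec x (p D)); [exists Defs.C; endpoints_lra|].
  destruct (Rlt_le_dec x (p E)); [exists D; endpoints_lra|].
  destruct (Rlt_le_dec x (p F)); [exists E; endpoints_lra|].
  destruct (Rlt_le_dec x (p G)); [exists F; endpoints_lra|].
  destruct (Rlt_le_dec x (p H)); [exists G; endpoints_lra|].
  exists H; endpoints_lra.
Qed.

Lemma iet_f_in_domain x : in_domain x -> in_domain (iet_f x).
Proof.
  intros hx; destruct (in_piece_cover x hx) as [a ha].
  rewrite (iet_f_piece a x ha); unfold in_piece, in_domain in *.
  destruct a; endpoints_lra.
Qed.

Lemma iter_in_domain n x : in_domain x -> in_domain (Nat.iter n iet_f x).
Proof. intros hx; induction n as [|n IH]; [exact hx | exact (iet_f_in_domain _ IH)]. Qed.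

Definition in_BF (x : R) : Prop := in_piece B x \/ in_piece F x.

Lemma iet_f_lattice_step x : in_domain x ->
  exists u k, iet_f x = x + lattice u (10 - 11 * k) /\ (k = 0 \/ k = 1 /\ in_BF x)%Z.
Proof.
  intros hx; destruct (in_piece_cover x hx) as [a ha].
  rewrite (iet_f_piece a x ha).
  destruct a;
    [ exists 430%Z, 0%Z | exists 100%Z, 1%Z | exists 100%Z, 0%Z | exists (-120)%Z, 0%Z
    | exists (-10)%Z, 0%Z | exists 100%Z, 1%Z | exists 100%Z, 0%Z | exists (-120)%Z, 0%Z ];
    (split; [endpoints_lra | unfold in_BF; tauto]).
Qed.

Lemma in_BF_not_thrice x :
  in_BF x -> in_BF (iet_f x) -> ~ in_BF (iet_f (iet_f x)).
Proof.
  unfold in_BF; intros [hx|hx]; rewrite (iet_f_piece _ _ hx);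
    intros [h1|h1]; rewrite (iet_f_piece _ _ h1);
    intros [h2|h2]; unfold in_piece in *; endpoints_lra.
Qed.

Lemma iter_lattice n x : in_domain x ->
  exists u K, Nat.iter n iet_f x = x + lattice u (10 * Z.of_nat n - 11 * K)
              /\ (0 <= K <= Z.of_nat n)%Z.
Proof.
  intros hx; induction n as [|n IH].
  - exists 0%Z, 0%Z; split; [unfold lattice; simpl; field | lia].
  - destruct IH as [u [K [e hK]]].
    destruct (iet_f_lattice_step _ (iter_in_domain n x hx)) as [u' [k [e' hk]]].
    exists (u + u')%Z, (K + k)%Z; split; [|lia].
    rewrite Nat.iter_succ, e', e, Rplus_assoc, lattice_add.
    f_equal; f_equal; lia.
Qed.

Lemma iter3_lattice x : in_domain x ->
  exists u K, Nat.iter 3 iet_f x = x + lattice u (30 - 11 * K) /\ (0 <= K <= 2)%Z.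
Proof.
  intros hx.
  destruct (iet_f_lattice_step x hx) as [u0 [k0 [e0 c0]]].
  destruct (iet_f_lattice_step _ (iter_in_domain 1 x hx)) as [u1 [k1 [e1 c1]]].
  destruct (iet_f_lattice_step _ (iter_in_domain 2 x hx)) as [u2 [k2 [e2 c2]]].
  change (Nat.iter 2 iet_f x) with (iet_f (iet_f x)) in e2, c2.
  change (Nat.iter 1 iet_f x) with (iet_f x) in e1, c1.
  exists (u0 + u1 + u2)%Z, (k0 + k1 + k2)%Z; split.
  - change (Nat.iter 3 iet_f x) with (iet_f (iet_f (iet_f x))).
    rewrite e2, e1, e0, !Rplus_assoc, !lattice_add.
    f_equal; f_equal; lia.
  - destruct c0 as [c0|[c0 b0]], c1 as [c1|[c1 b1]], c2 as [c2|[c2 b2]]; try lia.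
    exfalso; apply (in_BF_not_thrice x); assumption.
Qed.

Lemma iter_lattice_sparse n x : in_domain x ->
  exists u K, Nat.iter n iet_f x = x + lattice u (10 * Z.of_nat n - 11 * K)
              /\ (0 <= K /\ 3 * K <= 2 * Z.of_nat n + 2)%Z.
Proof.
  revert x; induction n as [n IH] using lt_wf_ind; intros x hx.
  destruct (Nat.lt_ge_cases n 3) as [hn|hn].
  - destruct (iter_lattice n x hx) as [u [K [e hK]]].
    exists u, K; split; [exact e | lia].
  - destruct (iter3_lattice x hx) as [u [K [e hK]]].
    destruct (IH (n - 3)%nat ltac:(lia) _ (iter_in_domain 3 x hx)) as [u' [K' [e' hK']]].
    exists (u + u')%Z, (K + K')%Z; split; [|lia].
    replace (Nat.iter n iet_f x) with (Nat.iter (n - 3) iet_f (Nat.iter 3 iet_f x))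
      by (rewrite <- Nat.iter_add; f_equal; lia).
    rewrite e', e, Rplus_assoc, lattice_add.
    f_equal; f_equal; lia.
Qed.

Section IrrationalPI.

Hypothesis PI_irrational : forall u v : Z, IZR u * PI = IZR v -> u = 0%Z.

Lemma lattice_inj_w u1 w1 u2 w2 : lattice u1 w1 = lattice u2 w2 -> w1 = w2.
Proof.
  unfold lattice; intros e.
  assert (e1 : IZR (u1 - u2) = IZR (w2 - w1) * invPI) by (rewrite !minus_IZR; lra).
  assert (e2 : IZR (u1 - u2) * PI = IZR (w2 - w1)).
  { rewrite e1; unfold invPI; field; apply PI_neq0. }
  apply PI_irrational in e2; rewrite e2 in e1.
  pose proof invPI_bounds.
  destruct (Rmult_integral _ _ (eq_sym e1)) as [hw|]; [|lra].
  apply eq_IZR_R0 in hw; lia.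
Qed.

Lemma modified_keane_iet_f : modified_keane iet_f.
Proof.
  intros m a b hm hb1 hb0 heq.
  assert (hpa : in_domain (p a)) by (unfold in_domain; destruct a; endpoints_lra).
  destruct (iter_lattice_sparse m (p a) hpa) as [u [K [e hK]]].
  rewrite e, !p_lattice, lattice_add in heq.
  apply lattice_inj_w in heq.
  destruct a, b; cbn [p_coord snd] in heq; try lia;
    exfalso; first [apply hb1 | apply hb0]; endpoints_lra.
Qed.

End IrrationalPI.

(* The irrationality of [pi] is taken from mathcomp-analysis; Stdlib's [PI] is identified with
   it through the power series of the cosine. *)
From mathcomp Require Import all_boot all_order all_algebra.
From mathcomp Require Import all_classical all_reals.
From mathcomp Require Import topology normedtype sequences trigo pi_irrational.
From mathcomp Require Import Rstruct Rstruct_topology.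
Import Order.TTheory GRing.Theory Num.Theory.
Import numFieldNormedType.Exports.
Local Open Scope ring_scope.

Lemma RcosE (x : R) : Rtrigo_def.cos x = trigo.cos x.
Proof.
apply/esym; rewrite /Rtrigo_def.cos; case: (exist_cos (Rsqr x)) => y.
rewrite /cos_in /infinite_sum /= => cos_ub.
rewrite -(cvg_lim _ (@cvg_cos_coeff' R x)) //.
apply: (@cvg_lim R^o) => //.
rewrite /series /= -cvg_shiftS /=; apply/cvgrPdist_lt => /= e /RltP /cos_ub[N Nub].
near=> n.
have nN : (n >= N)%coq_nat by apply/ssrnat.leP; near: n; exact: nbhs_infty_ge.
move: Nub => /(_ _ nN) /[!RdistE] /RltP /=.
rewrite distrC sum_f_R0E; congr (`| _ - _ | < e).
apply: eq_bigr => k _.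
rewrite /cos_n /cos_coeff' RdivE !RpowE factE INRE /Rsqr.
have -> : Rmult x x = x ^+ 2 by rewrite expr2.
by rewrite -exprM -mul2n mulrAC.
Unshelve. all: by end_near.
Qed.

Lemma PIE : PI = pi.
Proof.
have two : 2%:R = IZR 2.
  by rewrite mulr2n; change (Rplus (IZR 1) (IZR 1) = IZR 2); lra.
suff : PI / 2%:R = pi / 2%:R.
  by move/(congr1 (fun t => t * 2%:R)); rewrite !mulfVK ?pnatr_eq0.
apply: cos_02_uniq.
- have := PI_RGT_0; have := PI_4 => h4 h0.
  apply/andP; split; apply/RleP; rewrite -RdivE two;
    [change (Rle (IZR 0) (PI / IZR 2)) | ]; lra.
- by rewrite -RcosE -RdivE two cos_PI2.
- by case: (@pihalf_02_cos_pihalf R).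
- by case: (@pihalf_02_cos_pihalf R).
Qed.

Lemma IZR_int (z : Z) : exists k : int, IZR z = k%:~R.
Proof.
case: z => [|n|n]; first by exists 0.
- by exists (Posz (nat_of_pos n)); rewrite IZRposE INRE.
- by exists (- Posz (nat_of_pos n)); rewrite -[Z.neg n]/(Z.opp (Z.pos n)) opp_IZR IZRposE INRE mulrNz.
Qed.

Lemma PI_irrational (u v : Z) : Rmult (IZR u) PI = IZR v -> u = Z0.
Proof.
move=> e; case: (Z.eq_dec u Z0) => // hu; exfalso.
have [ku eu] := IZR_int u; have [kv ev] := IZR_int v.
have u_neq0 : IZR u != 0 by apply/eqP; exact: not_0_IZR.
apply: (@pi_irrationnal R); rewrite -PIE.
exists (kv%:~R / ku%:~R : rat) => //.
by rewrite fmorph_div !rmorph_int -eu -ev -e RmultE mulrAC divff ?mul1r.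
Qed.

Theorem proposition8p5 : modified_keane iet_f.
Proof. exact (modified_keane_iet_f PI_irrational). Qed.
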